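(* Let $H^*$ be a graph and let $A, B \subseteq V(H^* )$ be disjoint sets such that every vertex of $A$ is isolated in $H^*$ and $B$ has the robust sapphire property for $H^*$. Let $F \subseteq \{ab \colon a \in A, b \in B\}$ and $H \coloneqq (V(H^* ), E(H^* ) \cup F)$. Let $B_{=1} \coloneqq \{b \in B \colon |N_H(b) \cap A| =1\}$, $A' \coloneqq \{a \in A \colon d_H(a) \geq 4,\ N_H(a) \subseteq B_{=1}\}$, and $B' \coloneqq N_H(A \setminus A')$. Then $(S(H^* ) \setminus B') \cup A' \subseteq S(H)$. In addition, $B \setminus N_H(A)$ has the robust sapphire property for $H$.
   Context: For a graph $G$ and $X\subseteq V(G)$, $N_G(X)=\{x\in V(G)\setminus X: xy\in E(G)\text{ for some }y\in X\}$ (external neighbourhood), $N_G(x)=N_G(\{x\})$, $d_G(x)$ is the degree and $\mathrm{dist}_G$ is graph distance. The strong $4$-core $S(G)$ is the maximal set $X\subseteq V(G)$ such that $|N_G(x)\cap X|\geq 4$ for every $x\in X\cup N_G(X)$ (well-defined since the union of two such sets is again such a set). A set $B\subseteq V(G)$ has the robust sapphire property for $G$ if (RS1) for every $x\in B\cup N_G(B)$ we have $\{x\}\cup N_G(x)\subseteq S(G)$ and $d_G(x)\ge 5$; and (RS2) for all distinct $b_1,b_2\in B$, $\mathrm{dist}_G(b_1,b_2)\geq 5$. *)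

(* Finite simple graphs: a symmetric irreflexive rel on a finType. *)
From mathcomp Require Import all_boot.
Set Implicit Arguments. Unset Strict Implicit. Unset Printing Implicit Defensive.

Section Graphs.
Variable T : finType.
Implicit Types (e : rel T) (X : {set T}) (x y : T).

Definition nbhd e X : {set T} := [set x | (x \notin X) && [exists y in X, e y x]].
Definition nbhd1 e x : {set T} := nbhd e [set x].
Definition deg e x : nat := #|[set y | e x y]|.

(* dist_G(x,y) >= k : every walk from x to y has length >= k
   (vacuous if x,y are in different components, i.e. distance infinite) *)
Definition dist_ge e (k : nat) x y : Prop :=
  forall p : seq T, path e x p -> last x p = y -> k <= size p.

Definition core4 e X : bool :=
  [forall x in X :|: nbhd e X, 4 <= #|nbhd1 e x :&: X|].

(* strong 4-core: the maximal such set = the union of all such sets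
   (the family is closed under union) *)
Definition strong4core e : {set T} := \bigcup_(X | core4 e X) X.

Definition robust_sapphire e (B : {set T}) : Prop :=
  (forall x, x \in B :|: nbhd e B ->
     (x |: nbhd1 e x) \subset strong4core e /\ 5 <= deg e x) /\
  (forall b1 b2, b1 \in B -> b2 \in B -> b1 != b2 -> dist_ge e 5 b1 b2).

End Graphs.

From mathcomp Require Import all_boot zify.
Set Implicit Arguments. Unset Strict Implicit. Unset Printing Implicit Defensive.

(* Write S* for the strong 4-core of H*.  Vertices of A are isolated in H*, so
   they lie outside S*, and every new edge joins A to B.  A vertex x outside A
   has at least four H*-neighbours in S* \ B: if x has a neighbour b in B, then x
   has degree at least 5 and b is its only neighbour in B, since B is
   5-scattered.  These neighbours survive in X := (S* \ B') ∪ A' because B' ⊆ B.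
   A vertex a of A' has its at least four H-neighbours in B_{=1} ⊆ S*, and none
   of them is in B' because a is its only neighbour in A.  Hence X satisfies the
   defining condition of a strong 4-core of H.
   Around B \ N_H(A) nothing changes: those vertices and their neighbours see no
   new edge and avoid N_H(A) ⊇ B'.  An H-walk between two of them either uses
   only H*-edges, or reaches along H*-edges a vertex of N_H(A) ⊆ B before its
   first new edge; either way it has length at least 5. *)

Section Graph.
Variable T : finType.
Implicit Types (e : rel T) (X : {set T}) (x y : T).

Lemma in_nbhd e X y : (y \in nbhd e X) = (y \notin X) && [exists x in X, e x y].
Proof. by rewrite inE. Qed.

Lemma in_nbhd1 e x y : (y \in nbhd1 e x) = (y != x) && e x y.
Proof.
rewrite /nbhd1 in_nbhd in_set1; congr (_ && _).
by apply/exists_inP/idP => [[z /set1P -> //] | exy]; exists x; rewrite ?set11.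
Qed.

Lemma nbhd1E e x : irreflexive e -> nbhd1 e x = [set y | e x y].
Proof.
move=> e_irr; apply/setP => y; rewrite in_nbhd1 inE.
by case: eqP => [-> | //]; rewrite e_irr.
Qed.

Lemma deg_nbhd1 e x : irreflexive e -> deg e x = #|nbhd1 e x|.
Proof. by move=> e_irr; rewrite nbhd1E. Qed.

Lemma nbhd1S e1 e2 x : subrel e1 e2 -> nbhd1 e1 x \subset nbhd1 e2 x.
Proof.
move=> e12; apply/subsetP => y; rewrite !in_nbhd1 => /andP [-> /e12 //].
Qed.

Lemma adj_setU_nbhd e X x y : x \in X -> e x y -> y \in X :|: nbhd e X.
Proof.
move=> xX exy; rewrite in_setU in_nbhd.
by case: (y \in X) => //=; apply/exists_inP; exists x.
Qed.

Lemma core4_sub_strong4core e X : core4 e X -> X \subset strong4core e.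
Proof. exact: bigcup_sup. Qed.

Lemma strong4core_core4 e : core4 e (strong4core e).
Proof.
apply/forall_inP => x xSN.
suff [X coreX xX] : exists2 X, core4 e X & x \in X :|: nbhd e X.
  apply: leq_trans (forall_inP coreX x xX) _.
  exact/subset_leq_card/setIS/core4_sub_strong4core.
case/setUP: xSN => [/bigcupP [X coreX xX] | ].
  by exists X; rewrite // inE xX.
rewrite in_nbhd => /andP [_ /exists_inP [y /bigcupP [X coreX yX] eyx]].
by exists X; last exact: adj_setU_nbhd yX eyx.
Qed.

Lemma path_first_exit (e1 e2 : rel T) x p : path e2 x p -> path e1 x p \/
  exists q z, [/\ path e1 x q, e2 (last x q) z, ~~ e1 (last x q) z & size q < size p].
Proof.
elim: p x => [| y p IHp] x /=; first by left.
case/andP => e2xy e2p; have [e1xy | ne1xy] := boolP (e1 x y); last first.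
  by right; exists [::], y.
case: (IHp y e2p) => [e1p | [q [z [e1q e2z ne1z ltqp]]]]; first by left.
by right; exists (y :: q), z; rewrite /= e1xy.
Qed.

Section Sapphire.
Variables (e : rel T) (B : {set T}).
Hypotheses (e_sym : symmetric e) (e_irr : irreflexive e) (rsB : robust_sapphire e B).

Lemma sapphire_sub_core : B \subset strong4core e.
Proof.
apply/subsetP => b bB.
have bBN : b \in B :|: nbhd e B by rewrite inE bB.
have [sub _] := rsB.1 b bBN.
exact: subsetP sub b (setU11 _ _).
Qed.

Lemma sapphire_nonadj b1 b2 : b1 \in B -> b2 \in B -> ~~ e b1 b2.
Proof.
move=> b1B b2B; apply/negP => e12.
have n12 : b1 != b2 by apply: contraTneq e12 => ->; rewrite e_irr.
by have := rsB.2 _ _ b1B b2B n12 [:: b2]; rewrite /= e12 => /(_ isT erefl).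
Qed.

Lemma sapphire_nbr_uniq x b1 b2 : b1 \in B -> b2 \in B -> e x b1 -> e x b2 -> b1 = b2.
Proof.
move=> b1B b2B ex1 ex2; apply/eqP/contraT => n12.
have := rsB.2 _ _ b1B b2B n12 [:: x; b2].
by rewrite /= (e_sym b1) ex1 ex2 => /(_ isT erefl).
Qed.

Lemma sapphire_ball2 b x y : b \in B -> y \in B ->
  (x == b) || e b x -> (y == x) || e x y -> y = b.
Proof.
move=> bB yB /orP [/eqP -> | ebx] /orP [/eqP yx | exy].
- by rewrite yx.
- by move: (sapphire_nonadj bB yB); rewrite exy.
- by move: (sapphire_nonadj bB yB); rewrite yx ebx.
- by apply: sapphire_nbr_uniq yB bB exy _; rewrite e_sym.
Qed.

Lemma sapphire_core_nbhd x : x \in strong4core e :|: nbhd e (strong4core e) ->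
  4 <= #|nbhd1 e x :&: (strong4core e :\: B)|.
Proof.
move=> xSN; have [/exists_inP [b bB exb] | noB] := boolP [exists b in B, e x b].
  have [sub deg5] := rsB.1 x (adj_setU_nbhd bB (etrans (e_sym b x) exb)).
  have : nbhd1 e x :\ b \subset nbhd1 e x :&: (strong4core e :\: B).
    apply/subsetP => y /setD1P [nyb Nxy]; rewrite in_setI in_setD Nxy (subsetP sub) ?setU1r // andbT /=.
    apply: contra nyb => yB; apply/eqP; apply: sapphire_nbr_uniq yB bB _ exb.
    by move: Nxy; rewrite in_nbhd1 => /andP [].
  move/subset_leq_card; apply: leq_trans.
  by move: deg5; rewrite deg_nbhd1 // (cardsD1 b); case: (b \in _) => /=; lia.
apply: leq_trans (forall_inP (strong4core_core4 e) x xSN) (subset_leq_card _).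
apply/subsetP => y /setIP [Nxy yS]; rewrite in_setI in_setD Nxy yS andbT /=.
apply: contra noB => yB; apply/exists_inP; exists y => //.
by move: Nxy; rewrite in_nbhd1 => /andP [].
Qed.

End Sapphire.
End Graph.

Section Proposition.
Variables (T : finType) (eHs : rel T) (A B : {set T}) (F : {set T * T}).
Hypotheses (eHs_sym : symmetric eHs) (eHs_irr : irreflexive eHs).
Hypothesis disjAB : [disjoint A & B].
Hypothesis A_isolated : forall a y, a \in A -> ~~ eHs a y.
Hypothesis rsB : robust_sapphire eHs B.
Hypothesis F_AB : forall f, f \in F -> (f.1 \in A) && (f.2 \in B).

Local Notation S := (strong4core eHs).

Definition eH x y := [|| eHs x y, (x, y) \in F | (y, x) \in F].
Definition B1 := [set b in B | #|nbhd1 eH b :&: A| == 1].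
Definition A' := [set a in A | (4 <= deg eH a) && (nbhd1 eH a \subset B1)].
Definition B' := nbhd eH (A :\: A').
Definition Xcore := (S :\: B') :|: A'.
Definition B0 := B :\: nbhd eH A.

Lemma B_notin_A x : x \in B -> x \notin A.
Proof. by move=> xB; rewrite (disjointFl disjAB xB). Qed.

Lemma eH_sym : symmetric eH.
Proof. by move=> x y; rewrite /eH eHs_sym [((x, y) \in F) || _]orbC. Qed.

Lemma eH_irr : irreflexive eH.
Proof.
move=> x; rewrite /eH eHs_irr orbb; apply/negbTE/negP => /F_AB /andP [/= xA xB].
by move: (B_notin_A xB); rewrite xA.
Qed.

Lemma eHs_eH : subrel eHs eH.
Proof. by move=> x y; rewrite /eH => ->. Qed.

Lemma eHs_notin_A x y : eHs x y -> x \notin A.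
Proof. by move=> exy; apply/negP => xA; move: (A_isolated y xA); rewrite exy. Qed.

Lemma eH_A_B a y : a \in A -> eH a y -> y \in B.
Proof.
move=> aA; rewrite /eH (negbTE (A_isolated y aA)) /=.
case/orP => /F_AB /andP [/= h1 h2] //.
by move: (B_notin_A h2); rewrite aA.
Qed.

Lemma eH_eHsVA x y : x \notin A -> eH x y -> eHs x y || (y \in A).
Proof.
move=> xA /or3P [-> // | /F_AB /andP [/= x'A _] | /F_AB /andP [/= -> _]].
  by rewrite x'A in xA.
by rewrite orbT.
Qed.

Lemma nbhdA_adj a x : a \in A -> x \notin A -> eH a x -> x \in nbhd eH A.
Proof. by move=> aA xA eax; rewrite in_nbhd xA; apply/exists_inP; exists a. Qed.

Lemma nbhdA_sub_B : nbhd eH A \subset B.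
Proof.
apply/subsetP => y; rewrite in_nbhd => /andP [_ /exists_inP [a aA eay]].
exact: eH_A_B aA eay.
Qed.

Lemma B'_sub_nbhdA : B' \subset nbhd eH A.
Proof.
apply/subsetP => y; rewrite /B' {1}in_nbhd => /andP [_ /exists_inP [a /setDP [aA _] eay]].
exact: nbhdA_adj aA (B_notin_A (eH_A_B aA eay)) eay.
Qed.

Lemma A_notin_core a : a \in A -> a \notin S.
Proof.
move=> aA; apply/negP => aS.
have aSN : a \in S :|: nbhd eHs S by rewrite inE aS.
have := forall_inP (strong4core_core4 eHs) a aSN.
suff -> : nbhd1 eHs a :&: S = set0 by rewrite cards0.
by apply/setP => y; rewrite nbhd1E // !inE (negbTE (A_isolated y aA)).
Qed.

Lemma core_minus_nbhdA_sub : S :\: nbhd eH A \subset Xcore.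
Proof. exact/subset_trans/subsetUl/setDS/B'_sub_nbhdA. Qed.

Lemma A'_nbhd1_sub a : a \in A' -> nbhd1 eH a \subset Xcore.
Proof.
move=> aA'; move: (aA'); rewrite inE => /and3P [aA _ /subsetP NaB1].
apply/subsetP => y Nay; move: (NaB1 y Nay); rewrite inE => /andP [yB /cards1P [c NyA]].
have eay : eH a y by move: Nay; rewrite in_nbhd1 => /andP [].
have uniqA z : z \in A -> eH z y -> z = c.
  move=> zA ezy; apply/set1P; rewrite -NyA nbhd1E ?inE; [by rewrite eH_sym ezy zA | exact: eH_irr].
rewrite inE in_setD (subsetP (sapphire_sub_core rsB)) // andbT; apply/orP; left.
rewrite /B' in_nbhd; apply/negP => /andP [_ /exists_inP [a2 /setDP [a2A a2nA'] ea2y]].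
by move: a2nA'; rewrite (uniqA a2 a2A ea2y) -(uniqA a aA eay) aA'.
Qed.

Lemma A_core_nbhd a : a \in A -> a \in Xcore :|: nbhd eH Xcore -> a \in A'.
Proof.
move=> aA; case/setUP => [/setUP [/setDP [aS _] | //] | ].
  by move: (A_notin_core aA); rewrite aS.
rewrite in_nbhd => /andP [_ /exists_inP [y yX eya]]; apply: contraT => aA'.
have yB : y \in B by apply: eH_A_B aA _; rewrite eH_sym.
case/setUP: yX => [/setDP [_ /negP []] | /setIdP [yA _]]; last first.
  by move: (B_notin_A yB); rewrite yA.
rewrite /B' in_nbhd in_setD (negbTE (B_notin_A yB)) andbF /=.
by apply/exists_inP; exists a; rewrite 1?eH_sym // inE aA' aA.
Qed.

Lemma core_nbhd_notin_A x : x \notin A -> x \in Xcore :|: nbhd eH Xcore -> x \in S :|: nbhd eHs S.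
Proof.
move=> xA; case/setUP => [/setUP [/setDP [xS _] | /setIdP [x'A _]] | ].
- by rewrite inE xS.
- by rewrite x'A in xA.
rewrite in_nbhd => /andP [_ /exists_inP [y yX eyx]].
case/setUP: yX => [/setDP [yS _] | /setIdP [yA _]]; last first.
  by rewrite inE (subsetP (sapphire_sub_core rsB)) ?(eH_A_B yA eyx).
have yA : y \notin A by apply: contraL yS; exact: A_notin_core.
case/orP: (eH_eHsVA yA eyx) => [eHsyx | x'A]; last by rewrite x'A in xA.
exact: adj_setU_nbhd yS eHsyx.
Qed.

Lemma Xcore_core4 : core4 eH Xcore.
Proof.
apply/forall_inP => x xXN; have [xA | xA] := boolP (x \in A).
  have xA' := A_core_nbhd xA xXN; move: (xA'); rewrite inE => /and3P [_ deg4 _].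
  by rewrite (setIidPl (A'_nbhd1_sub xA')) -deg_nbhd1 //; exact: eH_irr.
apply: leq_trans (sapphire_core_nbhd eHs_sym eHs_irr rsB (core_nbhd_notin_A xA xXN)) _.
apply/subset_leq_card/setISS; first exact/nbhd1S/eHs_eH.
exact/subset_trans/core_minus_nbhdA_sub/setDS/nbhdA_sub_B.
Qed.

Lemma Xcore_sub : Xcore \subset strong4core eH.
Proof. exact/core4_sub_strong4core/Xcore_core4. Qed.

Lemma B0_ball x : x \in B0 :|: nbhd eH B0 -> exists2 b, b \in B0 & (x == b) || eHs b x.
Proof.
case/setUP => [xB0 | ]; first by exists x; rewrite ?eqxx.
rewrite in_nbhd => /andP [_ /exists_inP [b bB0 ebx]]; exists b => //; apply/orP; right.
move: bB0 => /setDP [/B_notin_A bA bN]; case/orP: (eH_eHsVA bA ebx) => // xA.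
by move: bN; rewrite (nbhdA_adj xA bA) // eH_sym.
Qed.

Lemma B0_closed_nbhd x : x \in B0 :|: nbhd eH B0 -> [/\ x \in B :|: nbhd eHs B,
  nbhd1 eH x = nbhd1 eHs x & x |: nbhd1 eHs x \subset S :\: nbhd eH A].
Proof.
case/B0_ball => b /setDP [bB bN] near_bx.
have xBN : x \in B :|: nbhd eHs B.
  by case/orP: near_bx => [/eqP -> | ebx]; [rewrite inE bB | exact: adj_setU_nbhd bB ebx].
have [sub _] := rsB.1 x xBN.
have avoid : x |: nbhd1 eHs x \subset S :\: nbhd eH A.
  apply/subsetP => y Nxy; rewrite in_setD (subsetP sub) // andbT.
  apply: contraNN bN => yN; suff <- : y = b by [].
  apply: (sapphire_ball2 eHs_sym eHs_irr rsB bB (subsetP nbhdA_sub_B y yN) near_bx).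
  by move: Nxy; rewrite in_setU1 in_nbhd1 => /orP [-> | /andP [_ ->]]; rewrite ?orbT.
have xA : x \notin A.
  case/orP: near_bx => [/eqP -> | ebx]; first exact: B_notin_A.
  by rewrite eHs_sym in ebx; exact: eHs_notin_A ebx.
have xN : x \notin nbhd eH A by move: (subsetP avoid x (setU11 _ _)); rewrite in_setD => /andP [].
split => //; apply/eqP; rewrite eqEsubset (nbhd1S x eHs_eH) andbT.
apply/subsetP => y; rewrite !in_nbhd1 => /andP [-> exy] /=.
case/orP: (eH_eHsVA xA exy) => // yA.
by move: xN; rewrite (nbhdA_adj yA xA) // eH_sym.
Qed.

Lemma B0_sapphire_closed x : x \in B0 :|: nbhd eH B0 ->
  x |: nbhd1 eH x \subset strong4core eH /\ 5 <= deg eH x.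
Proof.
case/B0_closed_nbhd => xBN NxE sub; have [_ deg5] := rsB.1 x xBN.
rewrite NxE deg_nbhd1 ?NxE -?deg_nbhd1 //; last exact: eH_irr.
split=> //; apply: subset_trans sub _.
exact/subset_trans/Xcore_sub/core_minus_nbhdA_sub.
Qed.

Lemma eHs_path_notin_A x q : path eHs x q -> x \notin A -> last x q \notin A.
Proof.
case/lastP: q => [| q y] //; rewrite rcons_path last_rcons => /andP [_ ey] _.
by rewrite eHs_sym in ey; exact: eHs_notin_A ey.
Qed.

Lemma B0_dist b1 b2 : b1 \in B0 -> b2 \in B0 -> b1 != b2 -> dist_ge eH 5 b1 b2.
Proof.
move=> /setDP [b1B b1N] /setDP [b2B _] n12 p pH pl.
have [pHs | [q [z [qHs yz nyz ltqp]]]] := path_first_exit eHs pH.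
  exact: rsB.2 _ _ b1B b2B n12 p pHs pl.
have yA : last b1 q \notin A := eHs_path_notin_A qHs (B_notin_A b1B).
have zA : z \in A by move: (eH_eHsVA yA yz); rewrite (negbTE nyz).
have yN : last b1 q \in nbhd eH A by apply: nbhdA_adj zA yA _; rewrite eH_sym.
have n1y : b1 != last b1 q by apply: contraNneq b1N => ->.
have := rsB.2 _ _ b1B (subsetP nbhdA_sub_B _ yN) n1y q qHs erefl.
by move/leq_trans; apply; apply: ltnW.
Qed.

Lemma B0_robust_sapphire : robust_sapphire eH B0.
Proof. by split; [exact: B0_sapphire_closed | exact: B0_dist]. Qed.

End Proposition.

Theorem proposition6p5 (T : finType) (eHs : rel T)
  (eHs_sym : symmetric eHs) (eHs_irr : irreflexive eHs)
  (A B : {set T}) (F : {set T * T}) :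
  [disjoint A & B] ->
  (forall a y, a \in A -> ~~ eHs a y) ->
  robust_sapphire eHs B ->
  (forall f, f \in F -> (f.1 \in A) && (f.2 \in B)) ->
  let eH := fun x y => [|| eHs x y, (x, y) \in F | (y, x) \in F] in
  let B1 := [set b in B | #|nbhd1 eH b :&: A| == 1] in
  let A' := [set a in A | (4 <= deg eH a) && (nbhd1 eH a \subset B1)] in
  let B' := nbhd eH (A :\: A') in
  ((strong4core eHs :\: B') :|: A') \subset strong4core eH /\
  robust_sapphire eH (B :\: nbhd eH A).
Proof.
move=> disjAB A_isolated rsB F_AB eH B1 A' B'.
split; [exact: Xcore_sub | exact: B0_robust_sapphire].
Qed.
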